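(* Let $\mathbb{G}$ be a Hausdorff topological group, and suppose that either (i) the action $\mathbb{G}\times\mathcal{C}\mathbb{G}\to\mathcal{C}\mathbb{G}$, $(h,[g,t])\mapsto[hg,t]$, on the quotient-topologized cone is discontinuous, or (ii) on $\mathbb{G}\times\mathcal{C}\mathbb{G}$ the quotient topology induced by $\mathbb{G}\times\mathbb{G}\times[0,1]\to\mathbb{G}\times\mathcal{C}\mathbb{G}$ differs from the product topology. Then the diagonal right translation action of $\mathbb{G}$ on the quotient-topologized join $\mathbb{G}*\mathbb{G}$ is discontinuous, and hence so is the diagonal right translation action of $\mathbb{G}$ on $E_n\mathbb{G}$ for every $1\le n\le\infty$.
   Context: The join $X*Y:=X\times Y\times[0,1]/\sim$ with $(x,y,0)\sim(x,y',0)$, $(x,y,1)\sim(x',y,1)$, points written $tx+(1-t)y$; more generally $E_n\mathbb{G}:=\mathbb{G}^{*(n+1)}$ is the set of formal convex combinations $\sum_{i=0}^n t_ig_i$ ($t_i\ge0$, $\sum t_i=1$, with $g_i$ irrelevant when $t_i=0$), topologized as a quotient of $\mathbb{G}^{n+1}\times\Delta^n$ ($\Delta^n$ the $n$-simplex), and $E_\infty\mathbb{G}=E\mathbb{G}:=\bigcup_n E_n\mathbb{G}$ carries the colimit topology. The cone is $\mathcal{C}\mathbb{G}:=\mathbb{G}\times[0,1]/(\mathbb{G}\times\{0\})$ with the quotient topology. $\mathbb{G}$ acts on $E_n\mathbb{G}$ on the right diagonally: $(\sum t_ig_i)g=\sum t_i(g_ig)$; continuity refers to the map $E_n\mathbb{G}\times\mathbb{G}\to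 E_n\mathbb{G}$ with the product topology on the domain. *)

From HB Require Import structures.
From mathcomp Require Import all_boot all_order all_algebra.
From mathcomp Require Import all_classical all_reals.
From mathcomp Require Import topology_structure product_topology subtype_topology
  sigT_topology quotient_topology function_spaces separation_axioms num_topology.
From mathcomp Require Import generic_quotient.

Set Implicit Arguments.
Unset Strict Implicit.
Unset Printing Implicit Defensive.
Import Order.TTheory GRing.Theory Num.Theory.
Import numFieldTopology.Exports.
Local Open Scope classical_set_scope.
Local Open Scope ring_scope.
Local Open Scope quotient_scope.

Definition topological_group (T : topologicalType) (mul : T -> T -> T)
    (inv : T -> T) (e : T) : Prop :=
  [/\ associative mul, left_id e mul, left_inverse e inv mul,
      continuous (fun p : T * T => mul p.1 p.2) & continuous inv].

(** * Quotients by the kernel of a "code" map.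
    Every identification below is of the form "p ~ q iff code p = code q",
    where code p records exactly the data that the point determines. *)
Definition ker_rel (P : Type) (Z : Type) (f : P -> Z) : rel P :=
  fun p q => `[< f p = f q >].

Lemma ker_rel_refl (P Z : Type) (f : P -> Z) : reflexive (ker_rel f).
Proof. by move=> p; apply/asboolP. Qed.
Lemma ker_rel_sym (P Z : Type) (f : P -> Z) : symmetric (ker_rel f).
Proof.
move=> p q; rewrite /ker_rel; apply/asboolP/asboolP => H; by rewrite H.
Qed.
Lemma ker_rel_trans (P Z : Type) (f : P -> Z) : transitive (ker_rel f).
Proof. by move=> q p r /asboolP H1 /asboolP H2; apply/asboolP; rewrite H1. Qed.

Definition ker_equiv (P : choiceType) (Z : Type) (f : P -> Z) : equiv_rel P :=
  EquivRel (ker_rel f) (@ker_rel_refl P Z f) (@ker_rel_sym P Z f)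
    (@ker_rel_trans P Z f).

Definition qspace (P : topologicalType) (Z : Type) (f : P -> Z) :=
  quotient_topology {eq_quot (ker_equiv f)}.

Definition unit_itv (R : realType) : set R := [set x | 0 <= x <= 1].
Notation I01 R := (set_type (@unit_itv R)).

(** * The cone  CG = G x [0,1] / (G x {0}) *)
Notation cone_pres R T := (T * I01 R)%type.
Definition cone_code (R : realType) (T : topologicalType) (p : cone_pres R T)
  : R * option T :=
  (\val p.2, if \val p.2 == 0 then None else Some p.1).
Definition cone (R : realType) (T : topologicalType) := qspace (@cone_code R T).

Definition cone_act (R : realType) (T : topologicalType) (mul : T -> T -> T)
  (p : T * cone R T) : cone R T :=
  let r := repr p.2 in \pi_(cone R T) (mul p.1 r.1, r.2).

Definition GxCone_map (R : realType) (T : topologicalType)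
  (q : T * cone_pres R T) : T * cone R T := (q.1, \pi_(cone R T) q.2).

(** * The join  G*G = G x G x [0,1] / ~ with
      (x,y,0) ~ (x,y',0) and (x,y,1) ~ (x',y,1)  *)
Notation join_pres R T := (T * T * I01 R)%type.
Definition join_code (R : realType) (T : topologicalType) (p : join_pres R T)
  : R * option T * option T :=
  (\val p.2, if \val p.2 == 1 then None else Some p.1.1,
             if \val p.2 == 0 then None else Some p.1.2).
Definition join (R : realType) (T : topologicalType) := qspace (@join_code R T).

Definition join_act (R : realType) (T : topologicalType) (mul : T -> T -> T)
  (p : join R T * T) : join R T :=
  let r := repr p.1 in \pi_(join R T) (mul r.1.1 p.2, mul r.1.2 p.2, r.2).

(** * E_n G = G^{*(n+1)} : quotient of G^{n+1} x Delta^n *)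
Definition simplex (R : realType) (n : nat) : set {ptws 'I_n.+1 -> R} :=
  [set t | (forall i, 0 <= t i) /\ \sum_(i < n.+1) t i = 1].

Notation En_pres R T n :=
  ({ptws 'I_n.+1 -> T} * set_type (@simplex R n))%type.

(** the formal convex combination  sum_i t_i g_i  represented by a point:
    weights extended by 0 to all indices, and g_i recorded only when t_i > 0 *)
Definition En_code (R : realType) (T : topologicalType) (n : nat)
  (p : En_pres R T n) : (nat -> R) * (nat -> option T) :=
  (fun k : nat => if (k < n.+1)%N then (\val p.2 : {ptws 'I_n.+1 -> R}) (inord k) else 0,
   fun k : nat => if (k < n.+1)%N && (0 < (\val p.2 : {ptws 'I_n.+1 -> R}) (inord k))
            then Some (p.1 (inord k)) else None).

Definition En (R : realType) (T : topologicalType) (n : nat) :=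
  qspace (@En_code R T n).

Definition En_pres_act (R : realType) (T : topologicalType) (mul : T -> T -> T)
  (n : nat) (p : En_pres R T n) (g : T) : En_pres R T n :=
  ((fun i => mul (p.1 i) g) : {ptws 'I_n.+1 -> T}, p.2).

Definition En_act (R : realType) (T : topologicalType) (mul : T -> T -> T)
  (n : nat) (p : En R T n * T) : En R T n :=
  \pi_(En R T n) (En_pres_act mul (repr p.1) p.2).

(** * E_infty G = union of the E_n G with the colimit topology, realised as the
    quotient of the topological disjoint union of the presentation spaces
    G^{n+1} x Delta^n by "same formal convex combination". *)
Definition En_pres_fam (R : realType) (T : topologicalType) :
  nat -> topologicalType := fun n => (En_pres R T n : topologicalType).

Notation Einf_pres R T := {n : nat & En_pres_fam R T n}.

Definition Einf_code (R : realType) (T : topologicalType) (s : Einf_pres R T) :=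
  @En_code R T (projT1 s) (projT2 s).

Definition Einf (R : realType) (T : topologicalType) := qspace (@Einf_code R T).

Definition Einf_act (R : realType) (T : topologicalType) (mul : T -> T -> T)
  (p : Einf R T * T) : Einf R T :=
  let r := repr p.1 in
  \pi_(Einf R T) (existT (En_pres_fam R T) (projT1 r)
                    (En_pres_act mul (projT2 r) p.2)).

From mathcomp Require Import all_boot all_order all_algebra.
From mathcomp Require Import all_classical all_reals.
From mathcomp Require Import topology_structure product_topology subtype_topology
  sigT_topology quotient_topology function_spaces separation_axioms num_topology.
From mathcomp Require Import generic_quotient initial_topology supremum_topology
  order_topology normedtype.

(* Suppose G acts continuously on Y, where Y is the join G*G or some E_n G
   with n >= 1.  Embedding the cone by [g,t] |-> (1 - t/2) e + (t/2) g and
   translating by h gives a continuous map G x CG -> Y,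
   (h, [g,t]) |-> (1 - t/2) h + (t/2) gh.  On the part of Y where the first
   weight is positive this map has a left inverse, induced by
   (x, y, s) |-> (x, [y x^-1, 2s]) on the presentation G x G x [0,1]; that map
   is continuous because G is a topological group.  Hence a set U in G x CG
   whose preimage in G x G x [0,1] is open is the preimage of an open subset
   of Y, so it is open: the product topology on G x CG is the quotient
   topology.  This contradicts (ii) directly, and (i) because the cone action
   is continuous for the quotient topology.  The weight t/2 rather than t keeps
   the first point, which records h, from being forgotten at t = 1. *)

Unset Printing Implicit Defensive.
Import Order.TTheory GRing.Theory Num.Theory.
Import numFieldTopology.Exports.
Local Open Scope classical_set_scope.
Local Open Scope ring_scope.
Local Open Scope quotient_scope.

Section ContinuityCombinators.
Context {X Y Z : topologicalType}.

Lemma pair_continuous {f : X -> Y} {g : X -> Z} :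
  continuous f -> continuous g -> continuous (fun x => (f x, g x)).
Proof. by move=> cf cg x; apply: cvg_pair; [exact: cf | exact: cg]. Qed.

Lemma fst_continuous : continuous (@fst X Y).
Proof. by move=> x; exact: cvg_fst. Qed.

Lemma snd_continuous : continuous (@snd X Y).
Proof. by move=> x; exact: cvg_snd. Qed.

Lemma comp_continuous {f : X -> Y} {g : Y -> Z} :
  continuous f -> continuous g -> continuous (g \o f).
Proof. by move=> cf cg x; apply: continuous_comp; [exact: cf | exact: cg]. Qed.

Lemma val_continuous {A : set X} : continuous (\val : set_type A -> X).
Proof. exact: initial_continuous. Qed.

Lemma continuous_into_subspace {A : set Y} {f : X -> set_type A} :
  continuous (\val \o f) -> continuous f.
Proof. exact: continuous_comp_initial. Qed.

Lemma ptws_continuous {I : eqType} {f : X -> {ptws I -> Y}} :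
  (forall i, continuous (fun x => f x i)) -> continuous f.
Proof.
move=> cf x; apply/cvg_sup => i.
exact: (@continuous_comp_initial _ X Y (fun g : I -> Y => g i) f (cf i)).
Qed.

Lemma ptws_eval_continuous {I : eqType} (i : I) :
  continuous (fun f : {ptws I -> Y} => f i).
Proof. exact: (@proj_continuous I (fun=> Y) i). Qed.

End ContinuityCombinators.

Section Clamp.
Context {R : realType}.

Definition clampr (r : R) : R := Num.min (Num.max r 0) 1.

Lemma clampr_unit_itv r : clampr r \in unit_itv (R:=R).
Proof.
apply/mem_set; rewrite /unit_itv /clampr /=.
by rewrite le_min ge_min lexx orbT andbT le_max lexx orbT ler01.
Qed.

Definition clamp (r : R) : I01 R := exist _ (clampr r) (clampr_unit_itv r).

Lemma clamp_id r : 0 <= r <= 1 -> \val (clamp r) = r.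
Proof. by case/andP=> r0 r1; rewrite /= /clampr (max_l r0) (min_l r1). Qed.

Lemma clamp_le0 r : r <= 0 -> \val (clamp r) = 0.
Proof. by move=> r0; rewrite /= /clampr (max_r r0) (min_l ler01). Qed.

Lemma clamp_continuous : continuous clamp.
Proof.
apply: continuous_into_subspace; apply: (@min_fun_continuous _ R R _ (fun _ => 1)).
  apply: (@max_fun_continuous _ R R id (fun _ => 0)) => [x|]; first exact: cvg_id.
  exact: cst_continuous.
exact: cst_continuous.
Qed.

Lemma unit_itvP (t : I01 R) : 0 <= \val t <= 1.
Proof. by have := set_valP t. Qed.

Definition halve (t : I01 R) : I01 R := clamp (\val t / 2).

Lemma halve_val t : \val (halve t) = \val t / 2.
Proof.
apply: clamp_id; have /andP[t0 t1] := unit_itvP t.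
by rewrite divr_ge0 //= ler_pdivrMr // mul1r (le_trans t1) // ler1n.
Qed.

Lemma halve_lt1 t : \val (halve t) < 1.
Proof.
have /andP[_ t1] := unit_itvP t.
by rewrite halve_val ltr_pdivrMr // mul1r (le_lt_trans t1) // ltr1n.
Qed.

Lemma halve_eq0 t : (\val (halve t) == 0) = (\val t == 0).
Proof. by rewrite halve_val mulf_eq0 invr_eq0 pnatr_eq0 orbF. Qed.

Lemma clamp_double_halve t : clamp (2 * \val (halve t)) = t.
Proof.
apply: val_inj; rewrite halve_val mulrC divfK ?pnatr_eq0 //.
exact/clamp_id/unit_itvP.
Qed.

Lemma halve_continuous : continuous halve.
Proof.
apply: (comp_continuous _ clamp_continuous).
exact: (comp_continuous val_continuous (@mulrr_continuous R 2^-1)).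
Qed.

End Clamp.

Arguments halve {R} t : simpl never.

Definition quotient_map {X Y : topologicalType} (q : X -> Y) : Prop :=
  forall U : set Y, open (q @^-1` U) -> open U.

Section KernelQuotient.
Context {P : topologicalType} {Z : Type} (f : P -> Z).
Local Notation Q := (qspace f).

Lemma qspace_eqP p q : \pi_Q p = \pi_Q q <-> f p = f q.
Proof.
split=> [pq|fpq].
  have : p == q %[mod {eq_quot ker_equiv f}] by exact/eqP.
  by rewrite eqmodE => /asboolP.
have : p == q %[mod {eq_quot ker_equiv f}] by rewrite eqmodE; exact/asboolP.
by move/eqP.
Qed.

Lemma code_repr_pi p : f (repr (\pi_Q p)) = f p.
Proof. by apply/qspace_eqP; rewrite reprK. Qed.

Definition saturated (S : set P) : Prop :=
  forall p q, f p = f q -> S p -> S q.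

Lemma saturated_repr_pi {S : set P} {p} :
  saturated S -> S (repr (\pi_Q p)) <-> S p.
Proof. by move=> satS; split; apply: satS; rewrite code_repr_pi. Qed.

Lemma qspace_open_saturated {S : set P} :
  open S -> saturated S -> open [set x : Q | S (repr x)].
Proof.
move=> oS satS; rewrite /open /= /quotient_open.
suff -> : \pi_Q @^-1` [set x : Q | S (repr x)] = S by [].
by apply/seteqP; split=> p; rewrite /= saturated_repr_pi.
Qed.

Lemma qspace_lift_continuous {Y : topologicalType} {g : P -> Y} :
  continuous g -> (forall p q, f p = f q -> g p = g q) ->
  continuous (g \o repr : Q -> Y).
Proof.
move=> cg gf; apply: repr_comp_continuous => // p q /eqP /qspace_eqP fpq.
exact/eqP/gf.
Qed.

End KernelQuotient.

Section TranslationEmbedding.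
Context {R : realType} {T : topologicalType}.
Local Notation cpi := (\pi_(cone R T)).

Lemma open_of_translation_embedding {P : topologicalType} {Z : Type} {f : P -> Z}
    {tr : T -> P -> P} {j : cone_pres R T -> P} {S : set P}
    {U : set (T * cone R T)} :
  continuous (fun z : qspace f * T => \pi_(qspace f) (tr z.2 (repr z.1))) ->
  continuous j -> (forall c c', cone_code c = cone_code c' -> f (j c) = f (j c')) ->
  (forall h p q, f p = f q -> f (tr h p) = f (tr h q)) ->
  open S -> saturated f S -> (forall h c, S (tr h (j c)) <-> U (h, cpi c)) ->
  open U.
Proof.
move=> cact cj fj ftr oS satS SU.
pose iota (c : cone R T) := \pi_(qspace f) (j (repr c)).
have ciota : continuous iota.
  apply: (qspace_lift_continuous (@cone_code R T) (comp_continuous cj pi_continuous)).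
  by move=> c c' /fj /qspace_eqP.
have satStr h : saturated f (fun p => S (tr h p)).
  by move=> p q /(ftr h); apply: satS.
have -> : U = (fun z => \pi_(qspace f) (tr z.1 (repr (iota z.2)))) @^-1`
                [set x | S (repr x)].
  apply/seteqP; split=> -[h c];
    by rewrite /= (saturated_repr_pi f satS) (saturated_repr_pi f (satStr h)) SU reprK.
have cphi : continuous (fun z => \pi_(qspace f) (tr z.1 (repr (iota z.2)))).
  exact: (comp_continuous (pair_continuous
    (comp_continuous snd_continuous ciota) fst_continuous) cact).
exact: (continuousP _).1 cphi _ (qspace_open_saturated f oS satS).
Qed.

End TranslationEmbedding.

Section TranslationActions.
Context {R : realType} {T : topologicalType}.
Context {mul : T -> T -> T} {inv : T -> T} {e : T}.
Hypothesis groupT : topological_group mul inv e.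

Let mulA : associative mul. Proof. by case: groupT. Qed.
Let mul1g : left_id e mul. Proof. by case: groupT. Qed.
Let mulVg : left_inverse e inv mul. Proof. by case: groupT. Qed.
Let mul_cont : continuous (fun p : T * T => mul p.1 p.2). Proof. by case: groupT. Qed.
Let inv_cont : continuous inv. Proof. by case: groupT. Qed.

Lemma mul_rinv x : mul x (inv x) = e.
Proof.
rewrite -[LHS]mul1g -{1}(mulVg (inv x)) -mulA (mulA (inv x) x) mulVg mul1g.
exact: mulVg.
Qed.

Lemma mul_rcancel h : cancel (mul^~ h) (mul^~ (inv h)).
Proof. by move=> g; rewrite -mulA mul_rinv -(mulVg g) mulA mul_rinv mul1g. Qed.

Lemma mul_continuous_fun {X : topologicalType} {f g : X -> T} :
  continuous f -> continuous g -> continuous (fun x => mul (f x) (g x)).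
Proof. by move=> cf cg; exact: (comp_continuous (pair_continuous cf cg) mul_cont). Qed.

Lemma right_quotient_continuous {X : topologicalType} {f g : X -> T} :
  continuous f -> continuous g -> continuous (fun x => mul (f x) (inv (g x))).
Proof. by move=> cf cg; apply: mul_continuous_fun => //; exact: comp_continuous. Qed.

Local Notation cpi := (\pi_(cone R T)).

Lemma cone_apex g g' (t : I01 R) : \val t = 0 -> cpi (g, t) = cpi (g', t).
Proof. by move=> t0; apply/qspace_eqP; rewrite /cone_code /= t0 eqxx. Qed.

Lemma cone_act_pi h c : @cone_act R T mul (h, cpi c) = cpi (mul h c.1, c.2).
Proof.
apply/qspace_eqP; have := code_repr_pi (@cone_code R T) c.
rewrite /cone_act /=; case: (repr (cpi c)) => g t; case: c => g' t'.
rewrite /cone_code /= => -[-> gg'].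
by case: ifP gg' => // _ [->].
Qed.

Lemma GxCone_map_continuous : continuous (@GxCone_map R T).
Proof.
apply: pair_continuous; first exact: fst_continuous.
exact: (comp_continuous snd_continuous pi_continuous).
Qed.

Lemma cone_act_continuous :
  quotient_map (@GxCone_map R T) -> continuous (@cone_act R T mul).
Proof.
move=> quotG; apply/continuousP => V oV; apply: quotG.
have -> : @GxCone_map R T @^-1` (@cone_act R T mul @^-1` V) =
    (fun q : T * cone_pres R T => cpi (mul q.1 q.2.1, q.2.2)) @^-1` V.
  by apply/seteqP; split=> q; rewrite /= /GxCone_map cone_act_pi.
suff cact : continuous (fun q : T * cone_pres R T => cpi (mul q.1 q.2.1, q.2.2)).
  exact: (continuousP _).1 cact _ oV.
apply: (comp_continuous _ pi_continuous); apply: pair_continuous.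
  apply: mul_continuous_fun; first exact: fst_continuous.
  exact: (comp_continuous snd_continuous fst_continuous).
exact: (comp_continuous snd_continuous snd_continuous).
Qed.

Definition join_translate (h : T) (q : join_pres R T) : join_pres R T :=
  ((mul q.1.1 h, mul q.1.2 h), q.2).

Lemma join_code_translate h q :
  join_code (join_translate h q) =
  let c := join_code q in (c.1.1, omap (mul^~ h) c.1.2, omap (mul^~ h) c.2).
Proof. by rewrite /join_code /=; case: ifP; case: ifP. Qed.

Definition cone_to_join (c : cone_pres R T) : join_pres R T := ((e, c.1), halve c.2).

Lemma cone_to_join_continuous : continuous cone_to_join.
Proof.
apply: pair_continuous.
  by apply: pair_continuous; [exact: cst_continuous | exact: fst_continuous].
exact: (comp_continuous snd_continuous (@halve_continuous R)).
Qed.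

Lemma join_code_cone_to_join c c' :
  cone_code c = cone_code c' -> join_code (cone_to_join c) = join_code (cone_to_join c').
Proof.
case: c c' => [g t] [g' t']; rewrite /cone_code /join_code /= !halve_eq0.
by move=> [/val_inj <-]; case: ifP => // _ [<-].
Qed.

Definition join_pullback (U : set (T * cone R T)) : set (join_pres R T) :=
  [set q | \val q.2 < 1 /\
           U (q.1.1, cpi (mul q.1.2 (inv q.1.1), clamp (2 * \val q.2)))].

Lemma join_pullback_open {U} :
  open (@GxCone_map R T @^-1` U) -> open (join_pullback U).
Proof.
move=> oU; apply: openI.
  exact: (continuousP _).1 (comp_continuous snd_continuous val_continuous) _
    (@open_lt R 1).
suff cpull : continuous (fun q : join_pres R T =>
    (q.1.1, (mul q.1.2 (inv q.1.1), clamp (2 * \val q.2)))).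
  exact: (continuousP _).1 cpull _ oU.
apply: pair_continuous; first exact: (comp_continuous fst_continuous fst_continuous).
apply: pair_continuous.
  apply: right_quotient_continuous.
    exact: (comp_continuous fst_continuous snd_continuous).
  exact: (comp_continuous fst_continuous fst_continuous).
apply: (comp_continuous _ (@clamp_continuous R)).
exact: (comp_continuous (comp_continuous snd_continuous val_continuous)
  (@mulrl_continuous R 2)).
Qed.

Lemma join_pullback_saturated U : saturated (@join_code R T) (join_pullback U).
Proof.
case=> [[x y] t] [[x' y'] t']; rewrite /join_code /join_pullback /=.
move=> [/val_inj <-]; case: ifP => [/eqP -> _ _ [] | _ [<-]]; first by rewrite ltxx.
case: (eqVneq (\val t) 0) => [t0 _ [t1 Ux] | _ [<-] //].
by split=> //; rewrite (@cone_apex _ (mul y (inv x))) // t0 mulr0 clamp_le0.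
Qed.

Lemma join_pullback_translate U h c :
  join_pullback U (join_translate h (cone_to_join c)) <-> U (h, cpi c).
Proof.
case: c => g t; rewrite /join_pullback /= halve_lt1 mul1g mul_rcancel clamp_double_halve.
by split=> [[]|].
Qed.

Lemma quotient_map_of_join_act_continuous :
  continuous (@join_act R T mul) -> quotient_map (@GxCone_map R T).
Proof.
move=> cact U oU.
have translate_code h p q : join_code p = join_code q ->
    join_code (join_translate h p) = join_code (join_translate h q).
  by move=> pq; rewrite !join_code_translate pq.
apply: (open_of_translation_embedding (tr := join_translate) cact
  cone_to_join_continuous join_code_cone_to_join translate_code
  (join_pullback_open oU) (join_pullback_saturated U)).
exact: join_pullback_translate.
Qed.

Lemma En_code_translate n h (p : En_pres R T n) :
  En_code (En_pres_act mul p h) =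
  ((En_code p).1, fun k => omap (mul^~ h) ((En_code p).2 k)).
Proof. by rewrite /En_code /=; congr pair; apply: funext => k; case: ifP. Qed.

Lemma En_code_point {n} {p : En_pres R T n} {k} :
  0 < (En_code p).1 k -> (En_code p).2 k = Some (p.1 (inord k)).
Proof. by rewrite /En_code /=; case: (k < n.+1)%N => [-> // | ]; rewrite ltxx. Qed.

Lemma En_weight_continuous {n} k :
  continuous (fun p : En_pres R T n => (En_code p).1 k).
Proof.
rewrite /En_code /=; case: (k < n.+1)%N; last exact: cst_continuous.
have cw : continuous (fun p : En_pres R T n => (\val p.2 : {ptws 'I_n.+1 -> R})).
  exact: (comp_continuous snd_continuous val_continuous).
exact: (comp_continuous cw (ptws_eval_continuous (inord k))).
Qed.

Lemma En_point_continuous {n} i : continuous (fun p : En_pres R T n => p.1 i).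
Proof. exact: (comp_continuous fst_continuous (ptws_eval_continuous i)). Qed.

(* For n = 0 the index 1 is out of range: [inord 1] is then index 0, but the
   weight read at 1 is 0, so the cone point is the apex anyway. *)
Definition En_pullback (U : set (T * cone R T)) n : set (En_pres R T n) :=
  [set p | 0 < (En_code p).1 0%N /\
     U (p.1 (inord 0), cpi (mul (p.1 (inord 1)) (inv (p.1 (inord 0))),
                            clamp (2 * (En_code p).1 1%N)))].

Lemma En_pullback_open {U} n :
  open (@GxCone_map R T @^-1` U) -> open (En_pullback U n).
Proof.
move=> oU; apply: openI.
  exact: (continuousP _).1 (En_weight_continuous 0%N) _ (@open_gt R 0).
suff cpull : continuous (fun p : En_pres R T n =>
    (p.1 (inord 0), (mul (p.1 (inord 1)) (inv (p.1 (inord 0))),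
                     clamp (2 * (En_code p).1 1%N)))).
  exact: (continuousP _).1 cpull _ oU.
apply: pair_continuous; first exact: En_point_continuous.
apply: pair_continuous.
  by apply: right_quotient_continuous; exact: En_point_continuous.
apply: (comp_continuous _ (@clamp_continuous R)).
exact: (comp_continuous (En_weight_continuous 1%N) (@mulrl_continuous R 2)).
Qed.

Lemma En_pullback_transfer U {n n'} (p : En_pres R T n) (p' : En_pres R T n') :
  En_code p = En_code p' -> En_pullback U n p -> En_pullback U n' p'.
Proof.
move=> pp' [w0 Up]; have w0' : 0 < (En_code p').1 0%N by rewrite -pp'.
split=> //; have [<-] : Some (p.1 (inord 0)) = Some (p'.1 (inord 0)).
  by rewrite -(En_code_point w0) -(En_code_point w0') pp'.
rewrite -pp'; case: (ltrP 0 ((En_code p).1 1%N)) => w1.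
  have w1' : 0 < (En_code p').1 1%N by rewrite -pp'.
  have [<-] : Some (p.1 (inord 1)) = Some (p'.1 (inord 1)).
    by rewrite -(En_code_point w1) -(En_code_point w1') pp'.
  exact: Up.
rewrite (@cone_apex _ (mul (p.1 (inord 1)) (inv (p.1 (inord 0))))) //.
by rewrite clamp_le0 // pmulr_rle0.
Qed.

Definition two_point_weights m (s : I01 R) : {ptws 'I_m.+2 -> R} :=
  fun i => if (nat_of_ord i == 0)%N then 1 - \val s
           else if (nat_of_ord i == 1)%N then \val s else 0.

Lemma two_point_weights_simplex {m} s :
  two_point_weights m s \in @simplex R m.+1.
Proof.
have /andP[s0 s1] := unit_itvP s; apply/mem_set; split.
  move=> i; rewrite /two_point_weights.
  by case: ifP => _; [rewrite subr_ge0 | case: ifP].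
rewrite 2!big_ord_recl big1 => [|i _]; last by rewrite /two_point_weights.
by rewrite /two_point_weights /= addr0 subrK.
Qed.

Definition two_point_simplex m (s : I01 R) : set_type (@simplex R m.+1) :=
  exist _ (two_point_weights m s) (two_point_weights_simplex s).

Lemma two_point_simplex_continuous m : continuous (two_point_simplex m).
Proof.
apply: continuous_into_subspace; apply: ptws_continuous => i.
rewrite /= /two_point_weights.
case: (nat_of_ord i == 0)%N; last case: (nat_of_ord i == 1)%N.
- move=> s; apply: (@continuousB R R^o _ (fun=> 1) (fun x : I01 R => \val x) s).
    exact: cst_continuous.
  exact: val_continuous.
- move=> s; exact: val_continuous.
- exact: cst_continuous.
Qed.

Definition two_point_points m (g : T) : {ptws 'I_m.+2 -> T} :=
  fun i => if (nat_of_ord i == 1)%N then g else e.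

Lemma two_point_points_continuous m : continuous (two_point_points m).
Proof.
apply: ptws_continuous => i; rewrite /two_point_points.
by case: (nat_of_ord i == 1)%N; [move=> g; exact: cvg_id | exact: cst_continuous].
Qed.

Definition cone_to_En m (c : cone_pres R T) : En_pres R T m.+1 :=
  (two_point_points m c.1, two_point_simplex m (halve c.2)).

Lemma cone_to_En_continuous m : continuous (cone_to_En m).
Proof.
apply: pair_continuous.
  exact: (comp_continuous fst_continuous (two_point_points_continuous m)).
exact: (comp_continuous (comp_continuous snd_continuous (@halve_continuous R))
  (two_point_simplex_continuous m)).
Qed.

Lemma En_code_cone_to_En m c c' :
  cone_code c = cone_code c' -> En_code (cone_to_En m c) = En_code (cone_to_En m c').
Proof.
case: c c' => [g t] [g' t']; rewrite /cone_code /= => -[/val_inj <- gg'].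
rewrite /En_code /=; congr pair; apply: funext => k.
case: ifP => // /andP[_]; rewrite /two_point_points /two_point_weights.
case: eqP => [-> // | _]; case: eqP => [_ | _]; last by rewrite ltxx.
by move=> /gt_eqF; rewrite halve_eq0 => t0; move: gg'; rewrite t0 => -[->].
Qed.

Lemma En_pullback_translate U m h c :
  En_pullback U m.+1 (En_pres_act mul (cone_to_En m c) h) <-> U (h, cpi c).
Proof.
have i0 : nat_of_ord (inord 0 : 'I_m.+2) = 0%N by rewrite inordK.
have i1 : nat_of_ord (inord 1 : 'I_m.+2) = 1%N by rewrite inordK.
case: c => g t; rewrite /En_pullback /En_code /=.
rewrite /two_point_weights /two_point_points i0 i1 /=.
rewrite subr_gt0 halve_lt1 mul1g mul_rcancel clamp_double_halve.
by split=> [[]|].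
Qed.

Lemma quotient_map_of_En_act_continuous m :
  continuous (@En_act R T mul m.+1) -> quotient_map (@GxCone_map R T).
Proof.
move=> cact U oU.
have translate_code h (p q : En_pres R T m.+1) : En_code p = En_code q ->
    En_code (En_pres_act mul p h) = En_code (En_pres_act mul q h).
  by move=> pq; rewrite !En_code_translate pq.
apply: (open_of_translation_embedding (tr := fun h p => En_pres_act mul p h) cact
  (cone_to_En_continuous m) (En_code_cone_to_En m) translate_code
  (En_pullback_open m.+1 oU) (En_pullback_transfer U)).
exact: En_pullback_translate.
Qed.

Lemma quotient_map_of_Einf_act_continuous :
  continuous (@Einf_act R T mul) -> quotient_map (@GxCone_map R T).
Proof.
move=> cact U oU.
apply: (open_of_translation_embedding (f := @Einf_code R T)
  (tr := fun h s => existT _ (projT1 s) (En_pres_act mul (projT2 s) h))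
  (j := fun c => existT (En_pres_fam R T) 1%N (cone_to_En 0 c))
  (S := [set s | En_pullback U _ (projT2 s)]) cact).
- exact: (comp_continuous (cone_to_En_continuous 0) (existT_continuous _)).
- by move=> c c' /(@En_code_cone_to_En 0).
- by move=> h [n p] [n' p']; rewrite /Einf_code /= !En_code_translate => ->.
- by apply/sigT_openP => n; exact: En_pullback_open.
- by move=> s s'; exact: En_pullback_transfer.
- exact: En_pullback_translate.
Qed.

End TranslationActions.

Theorem mainTheorem6 (R : realType) (T : topologicalType)
    (mul : T -> T -> T) (inv : T -> T) (e : T) :
  topological_group mul inv e ->
  hausdorff_space T ->
  (~ continuous (@cone_act R T mul) \/
   (exists U : set (T * cone R T),
       ~ (open U <-> open (@GxCone_map R T @^-1` U)))) ->
  ~ continuous (@join_act R T mul) /\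
  (forall n : nat, (1 <= n)%N -> ~ continuous (@En_act R T mul n)) /\
  ~ continuous (@Einf_act R T mul).
Proof.
move=> groupT _ hyp.
have not_quotient : ~ quotient_map (@GxCone_map R T).
  move=> quotG; case: hyp => [ncont | [U]].
    exact/ncont/(cone_act_continuous groupT).
  apply; split; last exact: quotG.
  exact: (continuousP _).1 GxCone_map_continuous U.
split; first by move/(quotient_map_of_join_act_continuous groupT).
split; last by move/(quotient_map_of_Einf_act_continuous groupT).
by case=> [//|m] _ /(quotient_map_of_En_act_continuous groupT).
Qed.
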